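(* For each infinite cardinal $\kappa$ there is a crowded (i.e. without isolated points) regular space of size $2^\kappa$ which has a $\kappa$-deep $\pi$-base.
   Context: A $\pi$-base $\mathcal{U}$ of a space is $\kappa$-deep if for every decreasing sequence $\{U_\alpha\}_{\alpha<\kappa}\subseteq\mathcal{U}$ the set $\bigcap_{\alpha<\kappa}U_\alpha$ has nonempty interior. *)

From HB Require Import structures.
From mathcomp Require Import all_boot all_order.
From mathcomp Require Import all_classical all_reals topology.
Set Implicit Arguments. Unset Strict Implicit. Unset Printing Implicit Defensive.
Local Open Scope classical_set_scope.

(* An (initial) ordinal kappa, presented as a carrier type K with a strict
   well-order ltK of order type kappa. *)
Definition strict_well_order (K : Type) (ltK : K -> K -> Prop) : Prop :=
  [/\ (forall a, ~ ltK a a),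
      (forall a b c, ltK a b -> ltK b c -> ltK a c),
      (forall a b, ltK a b \/ a = b \/ ltK b a) &
      well_founded ltK].

Definition infinite_cardinal (K : Type) (ltK : K -> K -> Prop) : Prop :=
  [/\ strict_well_order ltK,
      (exists g : nat -> K, injective g) &
      (forall k : K, ~ exists g : K -> {j : K | ltK j k}, injective g)].

Definition crowded (T : topologicalType) : Prop :=
  forall x : T, ~ open [set x].

Definition regular_T3 (T : topologicalType) : Prop :=
  hausdorff_space T /\ regular_space T.

Definition pi_base (T : topologicalType) (U : set (set T)) : Prop :=
  (forall V, U V -> open V /\ V !=set0) /\
  (forall W : set T, open W -> W !=set0 -> exists2 V, U V & V `<=` W).

Definition deep (K : Type) (ltK : K -> K -> Prop) (T : topologicalType)
  (U : set (set T)) : Prop :=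
  forall V : K -> set T,
    (forall a, U (V a)) ->
    (forall a b, ltK a b -> V b `<=` V a) ->
    (interior (\bigcap_a V a)) !=set0.

From HB Require Import structures.
From Stdlib Require Import Inverse_Image.
From mathcomp Require Import all_boot all_order.
From mathcomp Require Import all_classical all_reals topology.
Set Implicit Arguments. Unset Strict Implicit. Unset Printing Implicit Defensive.
Local Open Scope classical_set_scope.
Local Open Scope card_scope.

(* Let I be a set of size 2^kappa and consider the points of {0,1}^I with at
   most kappa nonzero coordinates, i.e. the subsets of I of size <= kappa,
   topologised by the cylinders fixing <= kappa coordinates.  There are
   (2^kappa)^kappa = 2^kappa points, the cylinders are clopen, and a point
   can be modified at a coordinate outside any given cylinder support since
   |I| > kappa.  A decreasing kappa-sequence of cylinders has pairwise
   compatible centres, which glue to one point; the union of the kappa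
   supports has size kappa * kappa = kappa, so the glued cylinder lies in the
   intersection.  The identity kappa * kappa = kappa for an infinite initial
   ordinal is Hessenberg's theorem, proved by transfinite recursion along
   Goedel's well-ordering of pairs. *)

Definition semiconnex (X : Type) (R : X -> X -> Prop) :=
  forall x y, x <> y -> R x y \/ R y x.

Lemma card_le_inj_on T U (A : set T) (B : set U) (f : T -> U) :
  set_fun A B f -> {in A &, injective f} -> A #<= B.
Proof.
move=> fAB finj; have : $|{injfun A >-> B}| by apply/injfunPex; exists f.
by case=> g; exact: inj_card_le.
Qed.

Lemma card_le_inj_onP T U (A : set T) (B : set U) (u0 : U) :
  A #<= B -> exists2 f : T -> U, set_fun A B f & {in A &, injective f}.
Proof.
pose UP : pointedType :=
  HB.pack U (gen_eqMixin U) (gen_choiceMixin U) (isPointed.Build U u0).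
by move=> /(@pcard_leP _ UP) /injfunPex.
Qed.

Lemma card_le_setX T U V W (A : set T) (B : set U) (C : set V) (D : set W)
    (u0 : U) (w0 : W) :
  A #<= B -> C #<= D -> A `*` C #<= B `*` D.
Proof.
move=> /(card_le_inj_onP u0) [f fAB finj] /(card_le_inj_onP w0) [g gCD ginj].
apply: (@card_le_inj_on _ _ _ _ (fun p => (f p.1, g p.2))).
  by move=> [a c] [/= Aa Cc]; split; [exact: fAB|exact: gCD].
move=> [a c] [a' c'] /set_mem [/= Aa Cc] /set_mem [/= Aa' Cc'] [fa gc].
by rewrite (finj a a') 1?(ginj c c') // inE.
Qed.

(* Hilbert's hotel: shift an injected copy of nat one step to make room. *)
Lemma card_le_setU1 T (S : set T) (m : T) :
  infinite_set S -> S `|` [set m] #<= S.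
Proof.
move=> Sinf; have [Sm|Snm] := pselect (S m).
  by apply: subset_card_le => x [//|->].
have /(card_le_inj_onP m) [e eS einj] := proj1 (infiniteP S) Sinf.
have {}einj : injective e by move=> n n' /einj; apply; rewrite inE.
pose e' n := if n is n'.+1 then e n' else m.
have e'_inj : injective e'.
  move=> [|n] [|n'] //= => [E|E|/einj -> //]; case: Snm;
    by [rewrite E; exact: eS|rewrite -E; exact: eS].
pose h x := if pselect (exists n, e' n = x) is left H then e (projT1 (cid H))
            else x.
have hE n : h (e' n) = e n.
  rewrite /h; case: pselect => [H|[]]; last by exists n.
  by case: (cid H) => n' /= /e'_inj ->.
apply: (@card_le_inj_on _ _ _ _ h).
  move=> x Sx; have [[n <-]|nx] := pselect (exists n, e' n = x).
    by rewrite hE; exact: eS.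
  rewrite /h; case: pselect => // _; case: Sx => // xm.
  by case: nx; exists 0%N.
move=> x y _ _.
have [[n <-]|nx] := pselect (exists n, e' n = x);
  have [[n' <-]|ny] := pselect (exists n, e' n = y).
- by rewrite !hE => /einj ->.
- by rewrite hE /h; case: pselect => [/ny[]|_ ey]; case: ny; exists n.+1.
- by rewrite hE /h; case: pselect => [/nx[]|_ ex]; case: nx; exists n'.+1.
- by rewrite /h; case: pselect => [/nx[]|_]; case: pselect => [/ny[]|_].
Qed.

(* A well-ordered set A injects into W as soon as no proper initial segment
   of A maps onto W: send each x to an element of W not hit earlier. *)
Lemma wf_card_le X Y (R : X -> X -> Prop) (A : set X) (W : set Y) (y0 : Y) :
  well_founded R -> semiconnex R ->
  (forall x (f : X -> Y), A x -> ~ W `<=` f @` (A `&` [set x' | R x' x])) ->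
  A #<= W.
Proof.
move=> R_wf R_semiconnex Wbig.
pose fresh x (rec : forall x', R x' x -> Y) w :=
  W w /\ forall x' (Rx'x : R x' x), A x' -> rec x' Rx'x <> w.
pose step x rec :=
  if pselect (exists w, fresh x rec w) is left H then projT1 (cid H) else y0.
pose f := Fix R_wf (fun _ => Y) step.
have fE x : f x = step x (fun x' _ => f x').
  apply: Fix_eq => x' g1 g2 g12; rewrite /step.
  have -> // : fresh x' g1 = fresh x' g2.
  apply/funext => w; apply/propext; rewrite /fresh.
  by split=> -[Ww Hw]; split=> // x'' h; [rewrite -g12|rewrite g12]; exact: Hw.
have f_fresh x : A x -> fresh x (fun x' _ => f x') (f x).
  move=> Ax; rewrite fE /step; case: pselect => [H|nH]; first by case: (cid H).
  case: (Wbig x f Ax) => w Ww; apply: contrapT => nw; apply: nH.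
  by exists w; split=> // x' Rx'x Ax' fx'w; apply: nw; exists x'.
apply: (@card_le_inj_on _ _ _ _ f) => [x /f_fresh [] //|x x' Ax Ax' fxx'].
move/set_mem: Ax => Ax; move/set_mem: Ax' => Ax'.
apply: contrapT => /R_semiconnex [Rxx'|Rx'x].
  by case: (f_fresh x' Ax') => _ /(_ x Rxx' Ax).
by case: (f_fresh x Ax) => _ /(_ x' Rx'x Ax') [].
Qed.

Definition lexR (A B : Type) (RA : A -> A -> Prop) (RB : B -> B -> Prop)
    (x y : A * B) :=
  RA x.1 y.1 \/ x.1 = y.1 /\ RB x.2 y.2.

Lemma wf_lexR (A B : Type) (RA : A -> A -> Prop) (RB : B -> B -> Prop) :
  well_founded RA -> well_founded RB -> well_founded (lexR RA RB).
Proof.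
move=> RA_wf RB_wf [a b]; elim/(well_founded_ind RA_wf): a b => a IHa b.
elim/(well_founded_ind RB_wf): b => b IHb.
by constructor => -[a' b'] [RAa'a|[/= -> RBb'b]]; [exact: IHa|exact: IHb].
Qed.

Lemma semiconnex_lexR (A B : Type) (RA : A -> A -> Prop) (RB : B -> B -> Prop) :
  semiconnex RA -> semiconnex RB -> semiconnex (lexR RA RB).
Proof.
move=> RAc RBc [a b] [a' b'] ne; rewrite /lexR /=.
have [aa'|/RAc[]] := pselect (a = a'); [|by left; left|by right; left].
have [bb'|/RBc[]] := pselect (b = b'); first by case: ne; rewrite aa' bb'.
  by left; right.
by right; right.
Qed.

Section InitialOrdinal.
Variables (K : Type) (ltK : K -> K -> Prop).
Hypothesis ltK_wo : strict_well_order ltK.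

Let ltK_trans a b c : ltK a b -> ltK b c -> ltK a c.
Proof. by case: ltK_wo => _ + _ _; apply. Qed.

Let ltK_wf : well_founded ltK. Proof. by case: ltK_wo. Qed.

Lemma strict_well_order_semiconnex : semiconnex ltK.
Proof. by case: ltK_wo => _ _ tri _ a b ab; case: (tri a b) => [|[|]]; tauto. Qed.

Definition seg (k : K) : set K := [set j | ltK j k].

Definition leK a b := ltK a b \/ a = b.

Lemma leK_trans a b c : leK a b -> leK b c -> leK a c.
Proof. by move=> [ab|->] [bc|<-]; [left; exact: ltK_trans ab bc|left|left|right]. Qed.

Definition maxK a b := if pselect (ltK a b) then b else a.

Lemma maxK_cases a b : maxK a b = a \/ maxK a b = b.
Proof. by rewrite /maxK; case: pselect; [right|left]. Qed.

Lemma leK_maxl a b : leK a (maxK a b).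
Proof. by rewrite /maxK; case: pselect => ab; [left|right]. Qed.

Lemma leK_maxr a b : leK b (maxK a b).
Proof.
rewrite /maxK; case: pselect => [ab|nab] /=; first by right.
have [->|/strict_well_order_semiconnex[/nab[]|ba]] := pselect (a = b).
  by right.
by left.
Qed.

(* Goedel's well-ordering of pairs: first by maximum, then lexicographically. *)
Definition ltK2 (p q : K * K) :=
  lexR ltK (lexR ltK ltK) (maxK p.1 p.2, p) (maxK q.1 q.2, q).

Lemma ltK2_wf : well_founded ltK2.
Proof. exact/wf_inverse_image/wf_lexR/wf_lexR. Qed.

Lemma ltK2_semiconnex : semiconnex ltK2.
Proof.
have ltK_c := strict_well_order_semiconnex.
move=> p q pq; apply: semiconnex_lexR; [exact: ltK_c|exact: semiconnex_lexR|].
by case.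
Qed.

Lemma ltK2_bound p q : ltK2 q p ->
  leK q.1 (maxK p.1 p.2) /\ leK q.2 (maxK p.1 p.2).
Proof.
move=> qp; have qp_max : leK (maxK q.1 q.2) (maxK p.1 p.2).
  by case: qp => [|[]]; [left|right].
by split; apply: leK_trans qp_max; [exact: leK_maxl|exact: leK_maxr].
Qed.

(* Hessenberg's argument: a pair below p has both coordinates in the closed
   segment of m = max p, and so W would be no larger than that segment. *)
Lemma card_le_square (W : set K) :
  infinite_set W -> (forall m, W m -> ~ (W #<= seg m)) ->
  (forall m, W m -> infinite_set (seg m) -> seg m `*` seg m #<= seg m) ->
  W `*` W #<= W.
Proof.
move=> Winf Winit Wsq; have [w0 _] := infinite_setN0 Winf.
apply: (wf_card_le w0 ltK2_wf ltK2_semiconnex) => p f [Wp1 Wp2] Wf.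
set m := maxK p.1 p.2.
have Wm : W m by rewrite /m; case: (maxK_cases p.1 p.2) => ->.
have W_le : W #<= (seg m `|` [set m]) `*` (seg m `|` [set m]).
  apply: card_le_trans (subset_card_le Wf) _.
  apply: card_le_trans (card_image_le _ _) _.
  by apply: subset_card_le => q [_ /ltK2_bound].
have [seg_fin|seg_inf] := pselect (finite_set (seg m)).
  apply: Winf; apply: card_le_finite W_le _.
  by apply: finite_setX; rewrite finite_setU; split => //; exact: finite_set1.
apply: (Winit m Wm); apply: card_le_trans W_le _.
apply: card_le_trans (Wsq m Wm seg_inf).
by apply: (card_le_setX m m); exact: card_le_setU1.
Qed.

Lemma card_le_square_seg k :
  infinite_set (seg k) -> seg k `*` seg k #<= seg k.
Proof.
elim/(well_founded_ind ltK_wf): k => k IH k_inf.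
have [[j jk kj]|k_init] := pselect (exists2 j, ltK j k & seg k #<= seg j).
  have j_inf : infinite_set (seg j) by move=> /(card_le_finite kj).
  apply: card_le_trans (card_le_setX j j kj kj) _.
  apply: card_le_trans (IH j jk j_inf) _.
  by apply: subset_card_le => i ij; exact: ltK_trans ij jk.
apply: (card_le_square k_inf) => m mk; last exact: IH.
by move=> mk_le; apply: k_init; exists m.
Qed.

End InitialOrdinal.

Lemma infinite_cardinal_pairing (K : Type) (ltK : K -> K -> Prop) :
  infinite_cardinal ltK -> exists io : K * K -> K, injective io.
Proof.
move=> [ltK_wo [e e_inj] K_init].
have K_inf : infinite_set [set: K].
  by apply/infiniteP; apply: (@card_le_inj_on _ _ _ _ e) => // n n' _ _ /e_inj.
have /(card_le_inj_onP (e 0%N)) [io _ io_inj] :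
    [set: K] `*` [set: K] #<= [set: K].
  apply: (card_le_square ltK_wo K_inf) => [m _|m _]; last first.
    exact: card_le_square_seg.
  move=> /(card_le_inj_onP m) [h hS h_inj]; apply: (K_init m).
  exists (fun x => exist (fun j => ltK j m) (h x) (hS x I)).
  by move=> x y [] /h_inj; apply; rewrite inE.
by exists io => p q /io_inj; apply; rewrite inE.
Qed.

(* Subsets of I of size at most |nat * K|, which is kappa for infinite K. *)
Definition small (K I : Type) (D : set I) :=
  exists g : nat -> K -> I, forall i, D i -> exists n k, g n k = i.

Section Small.
Variables (K : Type) (I : pointedType).

Lemma sub_small (D D' : set I) : D `<=` D' -> small K D' -> small K D.
Proof. by move=> DD' [g Hg]; exists g => i /DD' /Hg. Qed.

Lemma small0 : small K (@set0 I).
Proof. by exists (fun _ _ => point). Qed.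

Lemma small1 (k0 : K) (i : I) : small K [set i].
Proof. by exists (fun _ _ => i) => j ->; exists 0%N, k0. Qed.

Lemma smallU (D D' : set I) : small K D -> small K D' -> small K (D `|` D').
Proof.
move=> [g Hg] [g' Hg'].
exists (fun n => if odd n then g n./2 else g' n./2) => i [/Hg|/Hg'] [n [k <-]].
  by exists n.*2.+1, k; rewrite /= odd_double /= uphalf_double.
by exists n.*2, k; rewrite odd_double doubleK.
Qed.

End Small.

Definition small_set (K : Type) (I : pointedType) := {A : set I | small K A}.
HB.instance Definition _ K I := gen_eqMixin (small_set K I).
HB.instance Definition _ K I := gen_choiceMixin (small_set K I).

Definition cyl K I (A : small_set K I) (D : set I) : set (small_set K I) :=
  [set B | forall i, D i -> sval B i = sval A i].

Definition cylinders K I : set (set (small_set K I)) :=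
  [set V | exists A D, small K D /\ V = cyl A D].

Definition small_open K I (W : set (small_set K I)) :=
  forall A, W A -> exists2 D, small K D & cyl A D `<=` W.

Section SmallOpen.
Variables (K : Type) (I : pointedType).

Lemma small_openT : small_open [set: small_set K I].
Proof. by move=> A _; exists set0 => //; exact: small0. Qed.

Lemma small_openI : setI_closed (@small_open K I).
Proof.
move=> W W' oW oW' A [/oW [D sD DW] /oW' [D' sD' D'W']].
exists (D `|` D'); first exact: smallU.
by move=> B AB; split; [apply: DW|apply: D'W'] => i Di; apply: AB; [left|right].
Qed.

Lemma small_open_bigcup (J : Type) (F : J -> set (small_set K I)) :
  (forall j, small_open (F j)) -> small_open (\bigcup_j F j).
Proof.
move=> oF A [j _ FjA]; have [D sD DF] := oF j A FjA.
by exists D => // B /DF FjB; exists j.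
Qed.

End SmallOpen.

HB.instance Definition _ K I := isOpenTopological.Build (small_set K I)
  (@small_openT K I) (@small_openI K I) (@small_open_bigcup K I).

Section SmallSetTopology.
Variables (K : Type) (I : pointedType).
Local Notation small_set := (small_set K I).

Lemma cyl_self (A : small_set) D : cyl A D A.
Proof. by []. Qed.

Lemma small_set_openE : @open small_set = @small_open K I.
Proof. by []. Qed.

Lemma small_set_inj (A B : small_set) : sval A = sval B -> A = B.
Proof. by case: A B => [A sA] [B sB] /= AB; exact: eq_exist. Qed.

Definition enum_small (A : small_set) : nat -> K -> I := projT1 (cid (svalP A)).

Lemma enum_smallP (A : small_set) i :
  sval A i -> exists n k, enum_small A n k = i.
Proof. by rewrite /enum_small; case: (cid (svalP A)) => g /= Hg /Hg. Qed.

Lemma cyl_open (A : small_set) D : small K D -> open (cyl A D).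
Proof.
by rewrite small_set_openE => sD B AB; exists D => // C BC i Di; rewrite BC // AB.
Qed.

Lemma cyl_closed (k0 : K) (A : small_set) D : closed (cyl A D).
Proof.
rewrite -[cyl A D]setCK; apply: open_closedC; rewrite small_set_openE => B nAB.
have [i Di BAi] : exists2 i, D i & sval B i <> sval A i.
  apply: contrapT => nex; apply: nAB => i Di.
  by apply: contrapT => BAi; apply: nex; exists i.
exists [set i]; first exact: small1.
by move=> C BC AC; apply: BAi; rewrite -(BC i erefl) (AC i Di).
Qed.

Lemma small_set_T3 (k0 : K) : regular_T3 small_set.
Proof.
split.
  rewrite open_hausdorff => A B /eqP nAB.
  have [i ABi] : exists i, sval A i <> sval B i.
    apply: contrapT => nex; apply: nAB; apply: small_set_inj.
    by apply/funext => i; apply: contrapT => ABi; apply: nex; exists i.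
  exists (cyl A [set i], cyl B [set i]); first by split; apply/mem_set.
  split; [exact/cyl_open/small1|exact/cyl_open/small1|].
  apply/eqP/seteqP; split => // C [/= AC BC]; apply: ABi.
  by rewrite -(AC i erefl) -(BC i erefl).
move=> A W [O [oO OA OW]]; have [D sD DO] := oO A OA.
exists (cyl A D); first by exists (cyl A D); split => //; exact: cyl_open.
by rewrite -((closure_id _).1 (@cyl_closed k0 A D)) => B /DO /OW.
Qed.

Lemma small_set_flip (k0 : K) (A : small_set) (i : I) :
  exists2 B : small_set, sval B i <> sval A i &
    forall j, j <> i -> sval B j = sval A j.
Proof.
pose B := [set j | (j = i -> ~ sval A i) /\ (j <> i -> sval A j)].
have sB : small K B.
  apply: (@sub_small K I B (sval A `|` [set i])).
    by move=> j [_ Bj]; have [ji|/Bj] := pselect (j = i); [right|left].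
  exact: smallU (svalP A) (small1 k0 i).
exists (exist _ B sB) => /= [BAi|j ji].
  have nAi : ~ sval A i by move=> Ai; have [/(_ erefl)] : B i by rewrite BAi.
  by apply: (nAi); rewrite -BAi /B; split=> [_|/(_ erefl)[]].
by apply/propext; split=> [[_ /(_ ji)]//|Aj]; split.
Qed.

Lemma cylinders_pi_base : pi_base (@cylinders K I).
Proof.
split=> [V [A [D [sD ->]]]|W oW [A WA]]; first by split; [exact: cyl_open|exists A].
have [D sD DW] := oW A WA.
by exists (cyl A D) => //; exists A, D.
Qed.

End SmallSetTopology.

Definition extend_bool X Y (j : X -> Y) (f : X -> bool) : Y -> bool :=
  fun y => `[< exists2 x, j x = y & f x >].

Section ExtendBool.
Variables (X Y : Type) (j : X -> Y).
Hypothesis j_inj : injective j.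

Lemma extend_boolE f x : extend_bool j f (j x) = f x.
Proof. by apply/asboolP/idP => [[x' /j_inj ->]|fx] //; exists x. Qed.

Lemma extend_bool_inj : injective (extend_bool j).
Proof. by move=> f f' ff'; apply/funext => x; rewrite -extend_boolE ff' extend_boolE. Qed.

Lemma cantor_diagonal (g : X -> Y -> bool) : exists d, forall x, g x <> d.
Proof.
exists (fun y => ~~ extend_bool j (fun x => g x (j x)) y) => x /(congr1 (@^~ (j x))).
by rewrite extend_boolE; case: (g x (j x)).
Qed.

End ExtendBool.

Section Pairing.
Variables (K : Type) (io : K * K -> K) (e : nat -> K).
Hypotheses (io_inj : injective io) (e_inj : injective e).

Definition unpair (m : K) : K * K :=
  if pselect (exists p, io p = m) is left H then projT1 (cid H) else (m, m).

Lemma unpairK p : unpair (io p) = p.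
Proof.
rewrite /unpair; case: pselect => [H|[]]; last by exists p.
by case: (cid H) => q /= /io_inj.
Qed.

Lemma small_bigcup I (F : K -> set I) :
  (forall a, small K (F a)) -> small K (\bigcup_a F a).
Proof.
move=> /choice [g Hg].
exists (fun n m => g (unpair m).1 n (unpair m).2) => i [a _ /Hg [n [k <-]]].
by exists n, (io (a, k)); rewrite unpairK.
Qed.

Lemma not_small_setT : ~ small K [set: K -> bool].
Proof.
move=> [g Hg].
have j_inj : injective (fun p : nat * K => io (e p.1, p.2)).
  by move=> [n k] [n' k'] /io_inj [/e_inj -> ->].
have [d gd] := cantor_diagonal j_inj (fun p => g p.1 p.2).
by have [n [k /(gd (n, k))]] := Hg d I.
Qed.

Lemma small_set_crowded : crowded (small_set K (K -> bool)).
Proof.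
move=> A; rewrite small_set_openE => /(_ A erefl) [D sD DA].
have [i Di] : exists i, ~ D i.
  apply: contrapT => allD; apply: not_small_setT; apply: sub_small sD => i _.
  by apply: contrapT => Di; apply: allD; exists i.
have [B BAi BA] := small_set_flip (e 0%N) A i.
suff BA' : B = A by apply: BAi; rewrite BA'.
by apply: DA => j Dj; apply: BA => ji; apply: Di; rewrite -ji.
Qed.

Lemma cyl_glue (I : pointedType) (y : K -> small_set K I) (D : K -> set I) :
  (forall a, small K (D a)) ->
  (forall a b i, D a i -> D b i -> sval (y a) i = sval (y b) i) ->
  exists W : small_set K I, cyl W (\bigcup_a D a) `<=` \bigcap_a cyl (y a) (D a).
Proof.
move=> sD compat.
pose w := [set i | exists2 a, D a i & sval (y a) i].
have sw : small K w.
  apply: sub_small (small_bigcup (fun a => svalP (y a))) => i [a _ yai].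
  by exists a.
exists (exist _ w sw) => B Bw a _ i Dai; rewrite Bw /=; last by exists a.
apply/propext; split => [[b Dbi ybi]|yai]; last by exists a.
by rewrite (compat a b).
Qed.

Lemma cylinders_deep (I : pointedType) (ltK : K -> K -> Prop) :
  semiconnex ltK -> deep ltK (@cylinders K I).
Proof.
move=> ltK_c V /choice [y /choice [D HV]] V_dec.
have sD a : small K (D a) by case: (HV a).
have VE a : V a = cyl (y a) (D a) by case: (HV a).
have lt_compat a b i : ltK a b -> D a i -> sval (y a) i = sval (y b) i.
  move=> ab Dai; have : V b (y b) by rewrite VE; exact: cyl_self.
  by move=> /(V_dec _ _ ab); rewrite VE => /(_ i Dai) ->.
have [W WV] : exists W, cyl W (\bigcup_a D a) `<=` \bigcap_a cyl (y a) (D a).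
  apply: cyl_glue => // a b i Dai Dbi.
  have [<- //|/ltK_c[ab|ba]] := pselect (a = b); first exact: lt_compat.
  by rewrite (lt_compat _ _ _ ba Dbi).
exists W, (cyl W (\bigcup_a D a)).
split=> //; first exact: cyl_open (small_bigcup sD).
by move=> B /WV BV a _; rewrite VE; exact: BV.
Qed.

Definition code (A : small_set K (K -> bool)) (x : nat * K * option K) : bool :=
  if x.2 is Some m then enum_small A x.1.1 x.1.2 m
  else `[< sval A (enum_small A x.1.1 x.1.2) >].

Lemma code_inj : injective code.
Proof.
move=> A B AB.
have gAB : enum_small A = enum_small B.
  apply/funext => n; apply/funext => k; apply/funext => m.
  exact: (congr1 (fun c => c (n, k, Some m)) AB).
have AB_on n k : sval A (enum_small A n k) <-> sval B (enum_small A n k).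
  by have := congr1 (fun c => c (n, k, None)) AB; rewrite /code /= -gAB;
    exact: asbool_eq_equiv.
apply: small_set_inj; apply/funext => i; apply/propext; split => [Ai|Bi].
  by have [n [k gi]] := enum_smallP Ai; rewrite -gi in Ai *; apply/AB_on.
have [n [k gi]] := enum_smallP Bi; rewrite -gi -gAB in Bi *.
by apply/AB_on.
Qed.

Definition encode_option (o : option K) : K :=
  if o is Some m then io (m, e 0%N) else io (e 0%N, e 1%N).

Lemma encode_option_inj : injective encode_option.
Proof.
case=> [m|] [m'|] /io_inj //= [].
- by move=> ->.
- by move=> _ /e_inj.
- by move=> _ /e_inj.
Qed.

Definition code_index (x : nat * K * option K) : K :=
  io (io (e x.1.1, x.1.2), encode_option x.2).

Lemma code_index_inj : injective code_index.
Proof.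
move=> [[n k] o] [[n' k'] o'] /io_inj [/io_inj [/e_inj -> ->]].
by move=> /encode_option_inj ->.
Qed.

Lemma small_set_card :
  exists f : small_set K (K -> bool) -> (K -> bool), bijective f.
Proof.
have : [set: small_set K (K -> bool)] #= [set: K -> bool].
  apply: Cantor_Bernstein.
    apply: (@card_le_inj_on _ _ _ _ (extend_bool code_index \o code)) => // A B _ _.
    by move=> /(extend_bool_inj code_index_inj) /code_inj.
  apply: (@card_le_inj_on _ _ _ _ (fun i => exist _ [set i] (small1 (e 0%N) i))).
    by [].
  by move=> i i' _ _ /(congr1 (fun S => sval S i')) /= E; apply/esym; rewrite E.
by move=> /card_set_bijP [f]; rewrite setTT_bijective; exists f.
Qed.

End Pairing.

Theorem lemma4p1 (K : Type) (ltK : K -> K -> Prop)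
  (hK : infinite_cardinal ltK) :
  exists T : topologicalType,
    [/\ crowded T, regular_T3 T,
        (exists f : T -> (K -> bool), bijective f) &
        exists U : set (set T), pi_base U /\ deep ltK U].
Proof.
have [ltK_wo [e e_inj] _] := hK.
have [io io_inj] := infinite_cardinal_pairing hK.
exists (small_set K (K -> bool)); split.
- exact: small_set_crowded io_inj e_inj.
- exact: small_set_T3 _ (e 0%N).
- exact: small_set_card io_inj e_inj.
- exists (@cylinders K (K -> bool)); split; first exact: cylinders_pi_base.
  exact: (cylinders_deep io_inj (I := K -> bool) (strict_well_order_semiconnex ltK_wo)).
Qed.
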